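(* In the setting of the addition algorithm, for every $\varphi\in\mathbb{R}^V$ with $M(\varphi)\le L(\tau,\varepsilon)$ we have $$\tau(v)-\tau'(v,r(\varphi,v))\le T^+(\varphi)_v-\varphi_v\le\tau(v)\quad\text{for all }v\in V.$$ Consequently (Corollary 2.4), for such $\varphi$, $\tau(v)-\varepsilon/2\le T^+(\varphi)_v-\varphi_v=\varphi_v-T^-(\varphi)_v\le\tau(v)$ for all $v\in V$.
   Context: Addition algorithm. Let $G=(V,E)$ be a finite connected graph ($v\sim w$ means $(v,w)\in E$), $\tau:V\to[0,\infty)$, $0<\varepsilon\le1/2$, and fix a total order $\preceq$ on $V$. Let $f:\mathbb{R}\to\mathbb{R}$ be $f(x)=0$ for $|x|\ge1$, $f(x)=(1+x)/\varepsilon$ on $[-1,-1+\varepsilon]$, $f(x)=1$ on $[-1+\varepsilon,1-\varepsilon]$, $f(x)=(1-x)/\varepsilon$ on $[1-\varepsilon,1]$. For $v\in V$, $h,t\in\mathbb{R}$ let $m_{v,h,t}(h')=\min(\tau(v)-t,\varepsilon/2)f(h'-h)+t$ if $\tau(v)\ge t$, and $m_{v,h,t}(h')=t$ if $\tau(v)<t$. On input $\varphi\in\mathbb{R}^V$ the algorithm outputs an ordering $P_1,\dots,P_{|V|}$ of $V$, numbers $s_k$ and functions $\tau_k:V\times\mathbb{R}\to\mathbb{R}$: set $\tau_1(v,h)=\tau(v)$; for $k=1,\dots,|V|$: let $P_k$ be the vertex $v\in V\setminus\{P_1,\dots,P_{k-1}\}$ minimizing $\tau_k(v,\varphi_v)$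 (ties broken by taking the $\preceq$-smallest); set $s_k=\tau_k(P_k,\varphi_{P_k})$; if $k<|V|$ set $\tau_{k+1}(v,h)=\tau_k(v,h)$ if $v\in\{P_1,\dots,P_k\}$ or $v\not\sim P_k$, and $\tau_{k+1}(v,h)=\min(\tau_k(v,h),m_{v,\varphi_{P_k},s_k}(h))$ otherwise. Define $T^+(\varphi)_{P_k}=\varphi_{P_k}+s_k$ ($1\le k\le|V|$) and $T^-(\varphi)=2\varphi-T^+(\varphi)$. Further notation: $d_G$ is graph distance; $\tau'(v,k):=\max\{\tau(v)-\tau(w):w\in V,\ d_G(v,w)\le k\}$ for integers $k\ge0$; $L(\tau,\varepsilon):=\sup\{k\ge0 \text{ integer}:\tau'(v,k)\le\varepsilon/2\ \forall v\in V\}-1$ (possibly $+\infty$). $\mathcal{E}(\varphi):=\{(v,w)\in E:|\varphi_v-\varphi_w|\ge1-\varepsilon\}$; $v\leftrightarrow w$ if $v$ and $w$ are connected by a path of edges of $\mathcal{E}(\varphi)$ (including $v=w$); $r(\varphi,v):=\max\{d_G(v,w):v\leftrightarrow w\}$ and $M(\varphi):=\max\{d_G(v,w):v\leftrightarrow w\}$ over all pairs. *)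

From HB Require Import structures.
From mathcomp Require Import all_boot all_order all_algebra.
Set Implicit Arguments. Unset Strict Implicit. Unset Printing Implicit Defensive.
Import Order.TTheory GRing.Theory Num.Theory.
Local Open Scope ring_scope.

Section Addition.
Variables (R : realFieldType) (V : finType).
Variable adj : rel V.
Variable tau : V -> R.
Variable eps : R.
Variable ord : rel V.

Definition fbump (x : R) : R :=
  if 1 <= `|x| then 0
  else if x <= -1 + eps then (1 + x) / eps
  else if x <= 1 - eps then 1
  else (1 - x) / eps.

Definition mvht (v : V) (h t h' : R) : R :=
  if t <= tau v then Num.min (tau v - t) (eps / 2) * fbump (h' - h) + t
  else t.

(* state after k steps: (P_1..P_k, s_1..s_k, tau_{k+1}) *)
Record state := State { Ps : seq V; ss : seq R; tk : V -> R -> R }.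

Definition is_next (phi : V -> R) (st : state) (v : V) : bool :=
  (v \notin Ps st) &&
  [forall w, (w \notin Ps st) ==>
     ((tk st v (phi v) < tk st w (phi w)) ||
      ((tk st v (phi v) == tk st w (phi w)) && ord v w))].

Definition step (phi : V -> R) (st : state) : state :=
  match [pick v | is_next phi st v] with
  | Some P =>
      let s := tk st P (phi P) in
      State (rcons (Ps st) P) (rcons (ss st) s)
        (fun v h => if (v \in rcons (Ps st) P) || ~~ adj v P then tk st v h
                    else Num.min (tk st v h) (mvht v (phi P) s h))
  | None => st
  end.

Definition run (phi : V -> R) : state :=
  iter #|V| (step phi) (State [::] [::] (fun v _ => tau v)).

Definition Tplus (phi : V -> R) (v : V) : R :=
  phi v + nth 0 (ss (run phi)) (index v (Ps (run phi))).
Definition Tminus (phi : V -> R) (v : V) : R := 2 * phi v - Tplus phi v.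

Fixpoint distle (k : nat) (v w : V) : bool :=
  match k with
  | 0 => v == w
  | k'.+1 => distle k' v w || [exists u, distle k' v u && adj u w]
  end.

(* graph distance d_G (for connected G; equals #|V| if unreachable) *)
Definition dG (v w : V) : nat :=
  find (fun k => distle k v w) (iota 0 #|V|.+1).

(* tau'(v,k) = max { tau v - tau w : d_G(v,w) <= k }  (the set contains w = v,
   so the max is >= 0 and folding from 0 gives the true maximum) *)
Definition tau' (v : V) (k : nat) : R :=
  \big[Num.max/0]_(w | distle k v w) (tau v - tau w).

Definition goodk (k : nat) : bool := [forall v, tau' v k <= eps / 2].

(* n <= L(tau,eps) = sup{k | goodk k} - 1, in N ∪ {+oo}:
   equivalently n + 1 <= sup{k | goodk k}, i.e. n+1 is below every
   natural upper bound of that set (vacuous if the sup is +oo). *)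
Definition leL (n : nat) : Prop :=
  forall b : nat, (forall k : nat, goodk k -> (k <= b)%N) -> (n.+1 <= b)%N.

Definition Ephi (phi : V -> R) : rel V :=
  fun v w => adj v w && (1 - eps <= `|phi v - phi w|).
Definition linked (phi : V -> R) (v w : V) : bool := connect (Ephi phi) v w.

Definition rphi (phi : V -> R) (v : V) : nat :=
  \max_(w | linked phi v w) dG v w.
Definition Mphi (phi : V -> R) : nat :=
  \max_(p : V * V | linked phi p.1 p.2) dG p.1 p.2.

End Addition.

From mathcomp Require Import all_boot all_order all_algebra lra.
Import Order.TTheory GRing.Theory Num.Theory.
Local Open Scope ring_scope.

(* The algorithm keeps the invariant that every value tau_k(v, phi_v), and hence
   every s_k, lies between tau(w) and tau(v) for some w with v <-> w.  It holds
   initially with w = v; when P_k is added and tau_k(v, .) is lowered to m(phi_v) at a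
   neighbour v of P_k, either (v, P_k) is an edge of E(phi), so v <-> w for the witness
   w of s_k, or f(phi_v - phi_{P_k}) = 1 and m(phi_v) >= tau(v) because
   tau(v) <= tau(w) + eps/2, w being within distance r(phi, P_k) + 1 <= M(phi) + 1 of v.
   Hence tau(v) - tau(w) <= tau'(v, r(phi, v)), and tau'(v, r(phi, v)) <= eps/2 since
   M(phi) <= L(tau, eps). *)

Set Implicit Arguments.
Unset Strict Implicit.

Lemma exists_minimum (T : eqType) (le : rel T) (s : seq T) (x : T) :
  total le -> transitive le -> x \in s -> exists2 m, m \in s & all (le m) s.
Proof.
move=> le_total le_trans xs; rewrite -(mem_sort le) in xs.
case def_s: (sort le s) xs => [//|m s'] _; exists m.
  by rewrite -(mem_sort le) def_s mem_head.
rewrite -(perm_all _ (permEl (perm_sort le s))) def_s /=.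
have := sort_sorted le_total s; rewrite def_s /= => /(order_path_min le_trans) ->.
by have := le_total m m; rewrite orbb => ->.
Qed.

Lemma exists_notin (T : finType) (s : seq T) : (size s < #|T|)%N -> exists x, x \notin s.
Proof.
move=> small_s; apply/existsP; apply: contraLR small_s; rewrite negb_exists -leqNgt.
move=> /forallP all_in; apply: leq_trans (card_size s).
by apply/subset_leq_card/subsetP => x _; apply/negbNE/all_in.
Qed.

Lemma mem_uniq_full (T : finType) (s : seq T) x : uniq s -> size s = #|T| -> x \in s.
Proof.
move=> uniq_s size_s; apply: contraT => x_notin.
have := max_card (mem (x :: s)); rewrite (card_uniqP _) /= ?x_notin //.
by rewrite size_s ltnn.
Qed.

Section Distance.
Variables (V : finType) (adj : rel V).

Lemma distle_leq k k' v w : (k <= k')%N -> distle adj k v w -> distle adj k' v w.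
Proof.
elim: k' => [|k' IH]; first by rewrite leqn0 => /eqP ->.
rewrite leq_eqVlt => /orP [/eqP -> // | lt_kk'] vw /=.
by rewrite (IH lt_kk' vw).
Qed.

Lemma distle_adjl k u v w : adj v u -> distle adj k u w -> distle adj k.+1 v w.
Proof.
move=> vu; elim: k w => [|k IH] w.
  by move=> /eqP <-; apply/orP; right; apply/existsP; exists v; rewrite /= eqxx.
case/orP=> [uw | /existsP [x /andP [ux xw]]]; apply/orP; first by left; apply: IH.
by right; apply/existsP; exists x; rewrite xw andbT; apply: IH.
Qed.

Lemma distle_path p x : path adj x p -> distle adj (size p) x (last x p).
Proof.
elim: p x => [|y p IH] x /=; first by rewrite eqxx.
by case/andP=> xy /IH; apply: distle_adjl.
Qed.

Lemma distle_dG v w : connect adj v w -> distle adj (dG adj v w) v w.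
Proof.
case/connectP=> p vp ->; case/shortenP: vp => p' vp' uniq_p' _.
have size_p' : (size p' <= #|V|)%N.
  by have := max_card (mem (v :: p')); rewrite (card_uniqP uniq_p') => /ltnW.
have dist_V := distle_leq size_p' (distle_path vp').
have has_V : has (fun k => distle adj k v (last v p')) (iota 0 #|V|.+1).
  by apply/hasP; exists #|V|; rewrite // mem_iota ltnSn.
have := nth_find 0 has_V; rewrite nth_iota ?add0n //.
by rewrite -[X in (_ < X)%N](size_iota 0) -has_find.
Qed.

End Distance.

Section Thresholds.
Variables (R : realFieldType) (V : finType) (adj : rel V) (tau : V -> R) (eps : R).

Lemma tau'_ge k v w : distle adj k v w -> tau v - tau w <= tau' adj tau v k.
Proof. by move=> vw; apply: (le_bigmax_cond _ (fun w => tau v - tau w) vw). Qed.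

Lemma tau'_leq k k' v : (k <= k')%N -> tau' adj tau v k <= tau' adj tau v k'.
Proof. by move=> le_kk'; apply: sub_bigmax => w; apply: distle_leq. Qed.

Lemma goodk_leL n : leL adj tau eps n -> goodk adj tau eps n.+1.
Proof.
move=> hn; apply: contraT => bad_n1.
suff: (n.+1 <= n)%N by rewrite ltnn.
apply: hn => k good_k; rewrite leqNgt; apply: contraNN bad_n1 => lt_nk.
by apply/forallP => v; apply: le_trans (tau'_leq v lt_nk) (forallP good_k v).
Qed.

Variable phi : V -> R.

Lemma linked_connect v w : linked adj eps phi v w -> connect adj v w.
Proof. by apply: connect_sub => x y /andP [xy _]; apply: connect1. Qed.

Lemma distle_rphi v w : linked adj eps phi v w -> distle adj (rphi adj eps phi v) v w.
Proof.
move=> vw; apply: distle_leq (distle_dG (linked_connect vw)).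
exact: (@leq_bigmax_cond V (linked adj eps phi v) (dG adj v) w vw).
Qed.

Lemma rphi_leq_Mphi v : (rphi adj eps phi v <= Mphi adj eps phi)%N.
Proof.
apply/bigmax_leqP => w vw.
exact: (@leq_bigmax_cond _ (fun p => linked adj eps phi p.1 p.2)
  (fun p => dG adj p.1 p.2) (v, w) vw).
Qed.

Hypothesis hM : leL adj tau eps (Mphi adj eps phi).

Lemma tau'_rphi_le v : tau' adj tau v (rphi adj eps phi v) <= eps / 2.
Proof.
apply: le_trans (forallP (goodk_leL hM) v).
by apply: tau'_leq; rewrite ltnW // ltnS rphi_leq_Mphi.
Qed.

Lemma tau_adj_linked v u w :
  adj v u -> linked adj eps phi u w -> tau v <= tau w + eps / 2.
Proof.
move=> vu uw.
have vw : distle adj (Mphi adj eps phi).+1 v w.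
  by apply: distle_leq (distle_adjl vu (distle_rphi uw)); rewrite ltnS rphi_leq_Mphi.
by have := tau'_ge vw; have := forallP (goodk_leL hM) v; lra.
Qed.

End Thresholds.

Section Bump.
Variables (R : realFieldType) (V : finType) (tau : V -> R) (eps : R).
Hypothesis eps_gt0 : 0 < eps.

Lemma fbump_ge0 x : 0 <= fbump eps x.
Proof.
rewrite /fbump; case: ifPn => //; rewrite -ltNge ltr_norml => /andP [x_gt x_lt].
by do 2?case: ifP => _; rewrite ?divr_ge0 ?(ltW eps_gt0) //; lra.
Qed.

Lemma fbump_small x : `|x| < 1 - eps -> fbump eps x = 1.
Proof.
rewrite ltr_norml => /andP [x_gt x_lt]; have eps_pos := eps_gt0; rewrite /fbump.
have /negbTE -> : ~~ (1 <= `|x|) by rewrite -ltNge ltr_norml; apply/andP; split; lra.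
have /negbTE -> : ~~ (x <= -1 + eps) by rewrite -ltNge; lra.
by have -> : x <= 1 - eps by lra.
Qed.

Lemma mvht_ge v h t h' : t <= mvht tau eps v h t h'.
Proof.
rewrite /mvht; case: ifP => // t_le; rewrite lerDr mulr_ge0 ?fbump_ge0 //.
by rewrite le_min subr_ge0 t_le /= divr_ge0 ?(ltW eps_gt0).
Qed.

Lemma mvht_ge_tau v h t h' : `|h' - h| < 1 - eps -> tau v <= t + eps / 2 ->
  tau v <= mvht tau eps v h t h'.
Proof.
move=> near_h tau_le; rewrite /mvht fbump_small // mulr1.
case: ifPn => [_ | /negbTE]; last by rewrite leNgt => /negbFE/ltW.
by rewrite -lerBlDr le_min lexx /=; lra.
Qed.

End Bump.

Section Algorithm.
Variables (R : realFieldType) (V : finType) (adj : rel V) (tau : V -> R) (eps : R).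
Variables (ord : rel V) (phi : V -> R).
Hypotheses (eps_gt0 : 0 < eps) (ord_trans : transitive ord)
  (ord_total : total ord) (hM : leL adj tau eps (Mphi adj eps phi)).

Definition sandwiched (x : R) (v : V) : Prop :=
  x <= tau v /\ exists2 w, linked adj eps phi v w & tau w <= x.

Lemma sandwiched_lower v u s t : adj v u -> sandwiched s u -> sandwiched t v ->
  sandwiched (Num.min t (mvht tau eps v (phi u) s (phi v))) v.
Proof.
move=> vu [_ [w uw tau_w]] [t_le [w' vw' tau_w']].
split; first by rewrite ge_min t_le.
have [_ | _] := leP t (mvht tau eps v (phi u) s (phi v)); first by exists w'.
case: (boolP (1 - eps <= `|phi v - phi u|)) => [far | /negbTE near].
  exists w; last exact: le_trans tau_w (mvht_ge tau eps_gt0 _ _ _ _).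
  by apply: connect_trans uw; apply: connect1; rewrite /Ephi vu far.
exists v; first exact: connect0.
apply: mvht_ge_tau => //; first by rewrite ltNge near.
by apply: le_trans (tau_adj_linked hM vu uw) _; rewrite lerD2r.
Qed.

Definition invariant (st : state R V) : Prop :=
  [/\ uniq (Ps st), size (ss st) = size (Ps st),
      forall v, v \notin Ps st -> sandwiched (tk st v (phi v)) v &
      forall v, v \in Ps st -> sandwiched (nth 0 (ss st) (index v (Ps st))) v].

Lemma exists_next st : (size (Ps st) < #|V|)%N -> exists P, is_next ord phi st P.
Proof.
move=> small_st; have [v0 v0_new] := exists_notin small_st.
pose key v := tk st v (phi v).
pose le_key v w := (key v < key w) || ((key v == key w) && ord v w).
have le_key_total : total le_key.
  by move=> v w; rewrite /le_key; case: ltgtP => //= _; apply: ord_total.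
have le_key_trans : transitive le_key.
  move=> w v x; rewrite /le_key.
  case/orP=> [lt_vw | /andP [/eqP -> ord_vw]] /orP [lt_wx | /andP [/eqP <- ord_wx]].
  - by rewrite (lt_trans lt_vw lt_wx).
  - by rewrite lt_vw.
  - by rewrite lt_wx.
  - by rewrite eqxx (ord_trans ord_vw ord_wx) orbT.
have v0_in : v0 \in [seq v <- enum V | v \notin Ps st] by rewrite mem_filter v0_new mem_enum.
have [P] := exists_minimum le_key_total le_key_trans v0_in.
rewrite mem_filter => /andP [P_new _] /allP P_min; exists P.
rewrite /is_next P_new; apply/forallP => w; apply/implyP => w_new.
by apply: P_min; rewrite mem_filter w_new mem_enum.
Qed.

Lemma step_invariant st : invariant st -> (size (Ps st) < #|V|)%N ->
  invariant (step adj tau eps ord phi st) /\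
  size (Ps (step adj tau eps ord phi st)) = (size (Ps st)).+1.
Proof.
case=> uniq_st size_st new_inv old_inv small_st.
have [P0 next_P0] := exists_next small_st.
rewrite /step; case: pickP => [P /andP [P_new _] | /(_ P0)]; last by rewrite next_P0.
have P_inv := new_inv P P_new.
rewrite /= size_rcons; split => //; split => /=.
- by rewrite rcons_uniq P_new uniq_st.
- by rewrite !size_rcons size_st.
- move=> v v_new; rewrite (negbTE v_new) /=.
  move: v_new; rewrite mem_rcons in_cons negb_or => /andP [_ v_new].
  case: (boolP (adj v P)) => [vP | _]; last exact: new_inv.
  exact: sandwiched_lower vP P_inv (new_inv v v_new).
- move=> v; rewrite -!cats1 index_cat nth_cat size_st mem_cat mem_seq1.
  case/orP => [v_old | /eqP ->]; first by rewrite v_old index_mem v_old; apply: old_inv.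
  by rewrite (negbTE P_new) /= eqxx addn0 ltnn subnn.
Qed.

Lemma run_invariant k : (k <= #|V|)%N ->
  invariant (iter k (step adj tau eps ord phi) (State [::] [::] (fun v _ => tau v))) /\
  size (Ps (iter k (step adj tau eps ord phi) (State [::] [::] (fun v _ => tau v)))) = k.
Proof.
elim: k => [_ | k IH lt_kV].
  by split=> //; split=> // v _; split=> //; exists v; first exact: connect0.
have [inv_k size_k] := IH (ltnW lt_kV).
by rewrite iterS; move: (step_invariant inv_k); rewrite size_k => /(_ lt_kV).
Qed.

Lemma Tplus_sandwiched v : sandwiched (Tplus adj tau eps ord phi v - phi v) v.
Proof.
have [[uniq_run _ _ old_inv] size_run] := run_invariant (leqnn #|V|).
by rewrite /Tplus addrC addKr; apply/old_inv/mem_uniq_full.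
Qed.

End Algorithm.

Theorem proposition2p3 (R : realFieldType) (V : finType) (adj : rel V)
  (tau : V -> R) (eps : R) (ord : rel V)
  (adj_sym : symmetric adj) (adj_irr : irreflexive adj)
  (G_conn : forall v w : V, connect adj v w)
  (tau_ge0 : forall v, 0 <= tau v)
  (eps_gt0 : 0 < eps) (eps_le : eps <= 1 / 2)
  (ord_refl : reflexive ord) (ord_anti : antisymmetric ord)
  (ord_trans : transitive ord) (ord_total : total ord)
  (phi : V -> R)
  (hM : leL adj tau eps (Mphi adj eps phi)) :
  forall v : V,
    (tau v - tau' adj tau v (rphi adj eps phi v)
       <= Tplus adj tau eps ord phi v - phi v <= tau v)
    /\ (tau v - eps / 2 <= Tplus adj tau eps ord phi v - phi v
        /\ Tplus adj tau eps ord phi v - phi v = phi v - Tminus adj tau eps ord phi v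
        /\ Tplus adj tau eps ord phi v - phi v <= tau v).
Proof.
move=> v; have [T_le [w vw tau_w]] := Tplus_sandwiched eps_gt0 ord_trans ord_total hM v.
have tau'_w := tau'_ge tau (distle_rphi vw).
have tau'_half := tau'_rphi_le hM v.
rewrite /Tminus; split; first (apply/andP; split); lra.
Qed.
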